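(* Let $n\ge2$ and let $c_1,c_2\ge 0$ satisfy $c_1-3c_2-3\ge0$, $c_2+1\ge 2n$ and $c_1\ge 3c_2+3+(c_2+1)^2$. Let $\mathcal{A}=(a_{i_1i_2i_3})$ be the third order $n$-dimensional tensor with $a_{i_1i_2i_3}=c_1$ if $i_1=i_2=i_3$; $a_{i_1i_2i_3}=c_2$ if not all indices are equal but at least two of them are equal; and $a_{i_1i_2i_3}=-1$ if $i_1,i_2,i_3$ are pairwise distinct. Then $\mathcal{A}$ is a strongly SOS tensor. In particular (when $n\ge3$, so that $\mathcal{A}$ has entries equal to $-1$), a strongly SOS tensor may have negative entries.
   Context: For a symmetric third order $n$-dimensional tensor $\mathcal{A}$ and $\mathbf{x}\in\mathbb{R}^n$, let $F_i(\mathbf{x})=\sum_{i_2,i_3=1}^n a_{ii_2i_3}x_{i_2}x_{i_3}$. $\mathcal{A}$ is a strongly SOS tensor if each $F_i$, $i=1,\dots,n$, is a sum of squares of real polynomials. *)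

From HB Require Import structures.
From mathcomp Require Import all_boot all_order all_algebra.
From mathcomp Require Import reals.
From mathcomp Require Import mpoly.
Set Implicit Arguments. Unset Strict Implicit. Unset Printing Implicit Defensive.
Import Order.TTheory GRing.Theory Num.Theory.
Local Open Scope ring_scope.

Definition tensor3 (R : realType) (n : nat) := 'I_n -> 'I_n -> 'I_n -> R.

Definition symmetric3 (R : realType) (n : nat) (A : tensor3 R n) : Prop :=
  forall i j k : 'I_n, A i j k = A j i k /\ A i j k = A i k j.

Definition Fpoly (R : realType) (n : nat) (A : tensor3 R n) (i : 'I_n)
  : {mpoly R[n]} :=
  \sum_(j < n) \sum_(k < n) A i j k *: ('X_j * 'X_k).

Definition is_sos (R : realType) (n : nat) (p : {mpoly R[n]}) : Prop :=
  exists s : seq {mpoly R[n]}, p = \sum_(q <- s) q ^+ 2.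

Definition strongly_SOS (R : realType) (n : nat) (A : tensor3 R n) : Prop :=
  symmetric3 A /\ forall i : 'I_n, is_sos (Fpoly A i).

Definition cor_tensor (R : realType) (n : nat) (c1 c2 : R) : tensor3 R n :=
  fun i j k =>
    if (i == j) && (j == k) then c1
    else if (i != j) && (j != k) && (i != k) then -1
    else c2.

(* Fix i and put y_j := x_j for j <> i, y_i := 0, S := sum_j y_j, Q := sum_j y_j^2, so
   that F_i = c1 x_i^2 + 2 c2 x_i S + (c2 + 1) Q - S^2.  Split c2 + 1 = e + n: by
   Lagrange's identity n Q - S^2 is half of sum_{j,k} (y_j - y_k)^2, and the remaining
   part completes to e sum_j (y_j + t x_i)^2 + r x_i^2 with e t = c2 and
   r = c1 - n c2^2 / e.  Both weights are nonnegative once e > 0 and n c2^2 <= c1 e,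
   which the hypotheses c2 + 1 >= 2n and c1 >= (c2 + 1)^2 guarantee. *)

From HB Require Import structures.
From mathcomp Require Import all_boot all_order all_algebra.
From mathcomp Require Import reals mpoly.
From mathcomp Require Import ring lra.
Import Order.TTheory GRing.Theory Num.Theory.
Local Open Scope ring_scope.

Section QuadraticIdentities.
Variables (T : comPzRingType) (n : nat) (y : 'I_n -> T).
Local Notation S := (\sum_j y j).
Local Notation Q := (\sum_j y j ^+ 2).

Lemma sum_sqrB_pairs : \sum_j \sum_k (y j - y k) ^+ 2 = (n%:R * Q - S ^+ 2) *+ 2.
Proof.
transitivity (\sum_j \sum_k (y j ^+ 2 + y k ^+ 2 - 2 * y j * y k)).
  by apply: eq_bigr => j _; apply: eq_bigr => k _; ring.
under eq_bigr => j _ do rewrite sumrB big_split sumr_const card_ord -mulr_sumr.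
rewrite sumrB big_split /= sumr_const card_ord sumrMnl -mulr_suml -mulr_sumr.
move: Q S => q s; ring.
Qed.

Lemma sum_sqrD_const (a : T) :
  \sum_j (y j + a) ^+ 2 = Q + 2 * a * S + n%:R * a ^+ 2.
Proof.
transitivity (\sum_j (y j ^+ 2 + 2 * a * y j + a ^+ 2)).
  by apply: eq_bigr => j _; ring.
rewrite !big_split /= sumr_const card_ord -mulr_sumr; ring.
Qed.

Lemma quadratic_form_sos_identity (x e t r h : T) : h *+ 2 = 1 ->
  (e * n%:R * t ^+ 2 + r) * x ^+ 2 + 2 * (e * t) * x * S + (e + n%:R) * Q - S ^+ 2
  = h * \sum_j \sum_k (y j - y k) ^+ 2 + e * \sum_j (y j + t * x) ^+ 2 + r * x ^+ 2.
Proof.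
move=> h2; rewrite sum_sqrB_pairs sum_sqrD_const [h * _]mulrnAr -mulrnAl h2 mul1r.
move: Q S => q s; ring.
Qed.
End QuadraticIdentities.

Section SumsOfSquares.
Variables (R : realType) (n : nat).
Implicit Types (p q : {mpoly R[n]}).

Lemma is_sos_sqr q : is_sos (q ^+ 2).
Proof. by exists [:: q]; rewrite big_seq1. Qed.

Lemma is_sosD p q : is_sos p -> is_sos q -> is_sos (p + q).
Proof. by move=> [s ->] [s' ->]; exists (s ++ s'); rewrite big_cat. Qed.

Lemma is_sos_sum (I : finType) (F : I -> {mpoly R[n]}) :
  (forall j, is_sos (F j)) -> is_sos (\sum_j F j).
Proof.
move=> sosF; apply: (big_ind (@is_sos R n)) => //; last exact: is_sosD.
by exists [::]; rewrite big_nil.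
Qed.

Lemma is_sosZ (w : R) p : 0 <= w -> is_sos p -> is_sos (w *: p).
Proof.
move=> w_ge0 [s ->]; exists [seq Num.sqrt w *: q | q <- s].
by rewrite big_map scaler_sumr; apply: eq_bigr => q _; rewrite exprZn sqr_sqrtr.
Qed.

End SumsOfSquares.

Section CorTensorForm.
Variables (R : realType) (n : nat) (i : 'I_n) (c1 c2 : R).

Definition X_off (j : 'I_n) : {mpoly R[n]} := if j == i then 0 else 'X_j.

Local Notation Y := X_off.
Local Notation D j := (if j == i then 'X_i else 0 : {mpoly R[n]}).

Lemma cor_tensor_termE (j k : 'I_n) :
  cor_tensor c1 c2 i j k *: ('X_j * 'X_k)
  = c1%:MP * (D j * D k) + c2%:MP * (D j * Y k + Y j * D k)
    + (if k == j then (c2 + 1)%:MP * Y j ^+ 2 else 0) - Y j * Y k.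
Proof.
rewrite -mul_mpolyC /cor_tensor /X_off.
case: (eqVneq j i) => [->|ji]; case: (eqVneq k i) => [->|ki] /=.
- by ring.
- by ring.
- by rewrite [i == j]eq_sym (negbTE ji); ring.
case: (eqVneq k j) => [->|kj] /=; first by rewrite rmorphD rmorph1; ring.
by rewrite rmorphN1; ring.
Qed.

Lemma Fpoly_cor_tensor :
  Fpoly (cor_tensor c1 c2) i
  = c1%:MP * 'X_i ^+ 2 + 2 * c2%:MP * 'X_i * \sum_j Y j
    + (c2 + 1)%:MP * \sum_j Y j ^+ 2 - (\sum_j Y j) ^+ 2.
Proof.
have sumD : \sum_j D j = 'X_i by rewrite -big_mkcond big_pred1_eq.
rewrite /Fpoly.
under eq_bigr => j _.
  under eq_bigr => k _ do rewrite cor_tensor_termE.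
  rewrite sumrB !big_split /= -big_mkcond big_pred1_eq -!mulr_sumr.
  rewrite big_split /= -!mulr_sumr sumD.
  over.
rewrite /= sumrB !big_split /= -!mulr_sumr -!mulr_suml.
rewrite big_split /= -!mulr_suml sumD.
ring.
Qed.

End CorTensorForm.

Arguments X_off {R n} i j.

Lemma is_sos_Fpoly_cor_tensor (R : realType) (n : nat) (i : 'I_n) (c1 c2 : R) :
  0 < c2 + 1 - n%:R -> n%:R * c2 ^+ 2 <= c1 * (c2 + 1 - n%:R) ->
  is_sos (Fpoly (cor_tensor c1 c2) i).
Proof.
set e := c2 + 1 - n%:R => e_gt0 c1_large.
pose t := c2 / e; pose r := c1 - e * n%:R * t ^+ 2.
have et : e * t = c2 by rewrite mulrC divfK ?gt_eqF.
have r_ge0 : 0 <= r.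
  have -> : r = c1 - n%:R * c2 ^+ 2 / e by rewrite /r -et; field; rewrite gt_eqF.
  by rewrite subr_ge0 ler_pdivrMr.
have Fpoly_sos_form : Fpoly (cor_tensor c1 c2) i
    = 2^-1 *: \sum_j \sum_k (X_off i j - X_off i k) ^+ 2
      + e *: \sum_j (X_off i j + t%:MP * 'X_i) ^+ 2 + r *: 'X_i ^+ 2.
  rewrite -!mul_mpolyC -quadratic_form_sos_identity; last first.
    by rewrite -rmorphMn -mulr_natr mulVf ?pnatr_eq0 ?rmorph1.
  rewrite -[e%:MP * t%:MP]rmorphM et Fpoly_cor_tensor /r /e; ring.
rewrite Fpoly_sos_form; apply: is_sosD; first apply: is_sosD; apply: is_sosZ.
- by rewrite invr_ge0 ler0n.
- by do 2 apply: is_sos_sum => ?; exact: is_sos_sqr.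
- exact: ltW.
- by apply: is_sos_sum => ?; exact: is_sos_sqr.
- by [].
- exact: is_sos_sqr.
Qed.

Lemma symmetric3_cor_tensor (R : realType) (n : nat) (c1 c2 : R) :
  symmetric3 (cor_tensor c1 c2 : tensor3 R n).
Proof.
move=> i j k; rewrite /cor_tensor; split.
- by case: (eqVneq i j) => [->|_] //=; rewrite andbC.
- by case: (eqVneq j k) => [->|_] //=; rewrite !andbF !andbT andbC.
Qed.

Theorem corollary4p3 (R : realType) (n : nat) (c1 c2 : R) :
  (2 <= n)%N -> 0 <= c1 -> 0 <= c2 ->
  0 <= c1 - 3 * c2 - 3 ->
  c2 + 1 >= 2 * n%:R ->
  c1 >= 3 * c2 + 3 + (c2 + 1) ^+ 2 ->
  strongly_SOS (@cor_tensor R n c1 c2) /\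
  ((3 <= n)%N -> exists i j k : 'I_n, @cor_tensor R n c1 c2 i j k < 0).
Proof.
move=> _ _ c2_ge0 _ c2_large c1_large; split.
  split=> [|i]; first exact: symmetric3_cor_tensor.
  by apply: is_sos_Fpoly_cor_tensor; nra.
move=> n_ge3; exists (Ordinal (ltnW (ltnW n_ge3))), (Ordinal (ltnW n_ge3)), (Ordinal n_ge3).
by rewrite /cor_tensor /= ltrN10.
Qed.
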